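(* Let $A$ be a linear Nakayama algebra with simple modules $S_0,\dots,S_{n-1}$, Kupisch series $[c_0,\dots,c_{n-1}]$ and Jacobson radical $J$, and let $d_j=\dim_K D(Ae_j)$. Let $0\le s\le n-2$ and $1\le t\le c_s-1$. Then the module $e_sJ^t$ has injective dimension at most one if and only if $d_{s+c_s-1}-c_s+t=d_{s+t-1}$, and in this case its injective dimension equals one. In particular, $e_sJ$ has injective dimension at most one if and only if $d_{s+c_s-1}-c_s+1=d_s$.
   Context: $K$ is a field; a linear Nakayama algebra with $n$ simple modules is a connected algebra $A=KQ/I$ with $Q$ the quiver $0\to1\to\cdots\to n-1$ and $I$ admissible; modules are finite-dimensional right modules. $e_iA$ is uniserial with composition factors $S_i,\dots,S_{i+c_i-1}$ from top to socle, $c_i=\dim_K e_iA$. $D=\operatorname{Hom}_K(-,K)$ and $D(Ae_j)$ is the injective envelope of $S_j$. *)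

(* Finite-dimensional right modules over a linear Nakayama
   algebra A = KQ/I, Q : 0 -> 1 -> ... -> n-1, encoded as representations of
   the bound quiver.  The admissible ideal I is determined by the Kupisch
   series c : I is generated by the paths of length c_i starting at i. *)
From HB Require Import structures.
From mathcomp Require Import all_boot all_order all_algebra.
Set Implicit Arguments. Unset Strict Implicit. Unset Printing Implicit Defensive.
Import GRing.Theory.
Local Open Scope ring_scope.

(* A representation of the quiver 0 -> 1 -> 2 -> ... : vector spaces K^(rdim i)
   (row vectors) and linear maps given by matrices acting on the right. *)
Record rep (K : fieldType) := Rep {
  rdim : nat -> nat ;
  rmap : forall i : nat, 'M[K]_(rdim i, rdim i.+1) }.

Section Nakayama.
Variables (K : fieldType) (n : nat) (c : nat -> nat).

Fixpoint pmap (M : rep K) (i k : nat) : 'M[K]_(rdim M i, rdim M (k + i)%N) :=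
  match k return 'M[K]_(rdim M i, rdim M (k + i)%N) with
  | 0 => 1%:M
  | k'.+1 => pmap M i k' *m rmap M (k' + i)
  end.

(* M is a (finite-dimensional right) A-module: supported on vertices 0..n-1
   and annihilated by the generating relations of I. *)
Definition is_module (M : rep K) : Prop :=
  (forall i, (n <= i)%N -> rdim M i = 0%N) /\
  (forall i, (i < n)%N -> pmap M i (c i) = 0).

Definition hom (M N : rep K) := forall i : nat, 'M[K]_(rdim M i, rdim N i).

Definition is_hom (M N : rep K) (f : hom M N) : Prop :=
  forall i, rmap M i *m f i.+1 = f i *m rmap N i.

Definition mono (M N : rep K) (f : hom M N) : Prop := forall i, row_free (f i).
Definition epi (M N : rep K) (f : hom M N) : Prop := forall i, row_full (f i).
Definition exact_at (M N P : rep K) (f : hom M N) (g : hom N P) : Prop :=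
  forall i, (f i == kermx (g i))%MS.

Definition injective_mod (I : rep K) : Prop :=
  is_module I /\
  forall (M N : rep K) (f : hom M N) (g : hom M I),
    is_module M -> is_module N -> is_hom f -> is_hom g -> mono f ->
    exists h : hom N I, is_hom h /\ forall i, f i *m h i = g i.

(* injective dimension <= m : existence of an injective coresolution
   0 -> M -> I_0 -> ... -> I_m -> 0, written as a chain of short exact
   sequences 0 -> M -> I_0 -> C -> 0 with id C <= m-1. *)
Fixpoint idim_le (m : nat) (M : rep K) : Prop :=
  match m with
  | 0 => injective_mod M
  | m'.+1 => exists (I C : rep K) (f : hom M I) (p : hom I C),
      injective_mod I /\ is_module C /\ is_hom f /\ is_hom p /\
      mono f /\ epi p /\ exact_at f p /\ idim_le m' C
  end.

(* The uniserial module with basis the paths from s of length >= t and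
   < c_s, i.e. e_s J^t : K at vertices s+t, ..., s+c_s-1, arrows acting by 1. *)
Definition eJ (s t : nat) : rep K :=
  @Rep K (fun i => if (((s + t) <= i) && (i <= s + c s - 1))%N then 1%N else 0%N)
         (fun i => const_mx 1).

(* d_j = dim_K D(A e_j) = dim_K A e_j = number of nonzero paths ending at j,
   i.e. the number of i <= j with j - i < c_i. *)
Definition dinj (j : nat) : nat := count (fun i => (j < i + c i)%N) (iota 0 j.+1).

End Nakayama.

(** Over a linear Nakayama algebra, e_s J^t is the interval module [a+1, b] with
   a = s+t-1 and b = s+c_s-1, and the injective envelope D(Ae_j) of S_j is the interval
   [m_j, j], where m_j = j+1-d_j is the least i such that e_iA reaches j.  Hence
   0 -> [a+1, b] -> [m_b, b] -> [m_b, a] -> 0 is exact, and its cokernel is injective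
   when m_a = m_b, which is the stated dimension condition.
   If m_a < m_b, put k = m_b - 1: then [k+1, b] and [k, a] are modules but e_kA does not
   reach b.  Given 0 -> [a+1, b] -> I -> C -> 0 with I and C injective, extend the
   inclusion to u : [k+1, b] -> I; the induced map [k+1, a] -> C extends to [k, a] -> C,
   and lifting its value on the top through I -> C gives v in I_k with v.alpha_k equal to
   u of the top of [k+1, b].  So u vanishes at the vertex k+c_k of [a+1, b], because v
   times a path of length c_k is zero, and this contradicts injectivity of the inclusion.
   Finally [a+1, b] is never injective, being a non-split submodule of the module [a, b]. *)

From Pilot Require Import Defs.
From mathcomp Require Import all_boot all_order all_algebra.
From mathcomp Require Import zify.
Set Implicit Arguments. Unset Strict Implicit. Unset Printing Implicit Defensive.
Import GRing.Theory.
Local Open Scope ring_scope.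
Local Open Scope nat_scope.

Ltac case_support :=
  repeat match goal with |- context [if ?b then _ else _] => case: (boolP b) => /= ? end.

Section NakayamaModules.
Variable K : fieldType.

Local Notation ones p q := (const_mx (1%R : K) : 'M[K]_(p, q)).

Lemma mx_dim0_eq p q (A B : 'M[K]_(p, q)) : p = 0 \/ q = 0 -> A = B.
Proof.
by case=> dim0; subst; [rewrite (flatmx0 A) (flatmx0 B) | rewrite (thinmx0 A) (thinmx0 B)].
Qed.

Lemma mul_ones p q r : ones p q *m ones q r = const_mx q%:R.
Proof.
apply/matrixP => i j; rewrite !mxE.
under eq_bigr do rewrite !mxE mulr1.
by rewrite sumr_const card_ord.
Qed.

Lemma ones_id p : p <= 1 -> ones p p = 1%:M.
Proof.
move=> p_le1; apply/matrixP => i j; rewrite !mxE.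
have -> : i = j by apply/val_inj => /=; have := ltn_ord i; have := ltn_ord j; lia.
by rewrite eqxx.
Qed.

Lemma ones_mulI q r (A B : 'M[K]_(q, r)) :
  q <= 1 -> ones 1 q *m A = ones 1 q *m B -> A = B.
Proof.
case: q A B => [|[|//]] A B _; first by move=> _; apply: mx_dim0_eq; left.
by rewrite ones_id // !mul1mx.
Qed.

Lemma ones_free p q : p = 0 \/ p = 1 /\ q = 1 -> row_free (ones p q).
Proof.
case=> [->|[-> ->]]; first by rewrite /row_free -leqn0 rank_leq_row.
by rewrite ones_id // /row_free mxrank1.
Qed.

Lemma ones_full p q : q = 0 \/ p = 1 /\ q = 1 -> row_full (ones p q).
Proof.
case=> [->|[-> ->]]; first by rewrite /row_full -leqn0 rank_leq_col.
by rewrite ones_id // /row_full mxrank1.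
Qed.

Lemma ones_exact p q r :
  q = 0 \/ q = 1 /\ p = 1 /\ r = 0 \/ q = 1 /\ p = 0 /\ r = 1 ->
  (ones p q == kermx (ones q r))%MS.
Proof.
case=> [->|[[-> [-> ->]]|[-> [-> ->]]]].
- by apply/andP; split; rewrite [X in (X <= _)%MS]thinmx0 sub0mx.
- apply/andP; split; last by apply: submx_full; rewrite ones_id // /row_full mxrank1.
  by rewrite sub_kermx [X in X == _]thinmx0.
- have /eqP -> : kermx (ones 1 1) == 0%R by rewrite kermx_eq0 ones_id // /row_free mxrank1.
  by apply/andP; rewrite [X in (X <= _)%MS]flatmx0 !sub0mx.
Qed.

Definition uniserial (x y : nat) : rep K :=
  @Rep K (fun i => if (x <= i) && (i <= y) then 1 else 0) (fun i => ones _ _).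

Definition canon (x y x' y' : nat) : Defs.hom (uniserial x y) (uniserial x' y') :=
  fun i => ones _ _.

Lemma uniserial_dim_le1 x y i : rdim (uniserial x y) i <= 1.
Proof. by rewrite /=; case: ifP. Qed.

Lemma uniserial_dimR x y i : x <= i <= y -> (rdim (uniserial x y) i)%:R = 1%R :> K.
Proof. by move=> /= ->. Qed.

Lemma canon_hom x y x' y' : x' <= x -> y' <= y -> is_hom (canon x y x' y').
Proof.
move=> le_x le_y i; rewrite !mul_ones /=.
case_support; first [done | (apply: mx_dim0_eq; lia) | (exfalso; lia)].
Qed.

Lemma canon_mono x y x' y' : x' <= x -> y <= y' -> mono (canon x y x' y').
Proof. by move=> le_x le_y i; apply: ones_free => /=; case_support; lia. Qed.

Lemma canon_epi x y x' y' : x <= x' -> y' <= y -> epi (canon x y x' y').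
Proof. by move=> le_x le_y i; apply: ones_full => /=; case_support; lia. Qed.

Lemma canon_exact x z y : x <= z -> z <= y ->
  exact_at (canon z.+1 y x y) (canon x y x z).
Proof. by move=> le_xz le_zy i; apply: ones_exact => /=; case_support; lia. Qed.

Lemma uniserial_module n c x y : y < n ->
  (forall i, x <= i <= y -> y < i + c i) -> is_module n c (uniserial x y).
Proof.
move=> y_lt_n reach; split=> i i_n /=; first by case_support; lia.
apply: mx_dim0_eq => /=; case_support; try lia.
by have := reach i; lia.
Qed.

Section PullBack.
Variables (N : rep K) (j : nat) (u : forall l, 'M[K]_(rdim N l, 1)).

Fixpoint pull (d i : nat) : 'M[K]_(rdim N i, 1) :=
  if d is d'.+1 then rmap N i *m pull d' i.+1 else u i.

Definition pull_to (i : nat) : 'M[K]_(rdim N i, 1) := pull (j - i) i.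

Lemma pull_to_ge i : j <= i -> pull_to i = u i.
Proof. by move=> le_ji; rewrite /pull_to (_ : j - i = 0) //; lia. Qed.

Lemma pull_to_lt i : i < j -> pull_to i = rmap N i *m pull_to i.+1.
Proof. by move=> lt_ij; rewrite /pull_to -(subnSK lt_ij). Qed.

Lemma pull_to_pmap k i : i + k <= j -> pull_to i = Defs.pmap N i k *m pull_to (k + i).
Proof.
elim: k => [|k IHk] le_j; first by rewrite mul1mx.
by rewrite IHk 1?pull_to_lt -1?mulmxA //; lia.
Qed.

End PullBack.

Section InjectiveEnvelope.
Variables (n : nat) (c : nat -> nat) (x j : nat).
Hypotheses (j_lt_n : j < n) (x_le_j : x <= j)
  (reach_j : forall i, i <= j -> (j < i + c i) = (x <= i)).

Local Notation E := (uniserial x j).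

Lemma uniserial_injective : injective_mod n c E.
Proof.
split; first by apply: uniserial_module => // i /andP[le_xi le_ij]; rewrite reach_j.
move=> M N f g _ N_mod f_hom g_hom f_mono.
pose u l := if l == j then pinvmx (f l) *m g l *m ones (rdim E l) 1 else 0%R.
(* A map into D(Ae_j) is determined by a functional on the stalk at j, pulled back along
   the arrows. *)
pose w := pull_to j u.
have w_vanish i : i < x -> w i = 0%R.
  move=> lt_ix; have [lt_ji|le_ij] := ltnP j i.
    by rewrite /w pull_to_ge 1?ltnW // /u ifN // neq_ltn lt_ji orbT.
  have reach_i : i + c i <= j by have := reach_j le_ij; lia.
  rewrite /w (pull_to_pmap _ reach_i); have [lt_in|le_ni] := ltnP i n.
    by rewrite N_mod.2 // mul0mx.
  by apply: mx_dim0_eq; left; rewrite N_mod.1.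
have f_w d i : i + d = j -> x <= i -> f i *m w i = g i *m ones (rdim E i) 1.
  elim: d i => [|d IHd] i def_j le_xi.
    rewrite addn0 in def_j; subst i.
    rewrite /w pull_to_ge // /u eqxx (mulmxA (f j) (_ *m g j)) (mulmxA (f j) (pinvmx _)).
    by rewrite mulmxVp // mul1mx.
  rewrite /w pull_to_lt -/w; last by lia.
  rewrite mulmxA -f_hom -mulmxA IHd; [|lia|lia].
  by rewrite mulmxA g_hom -mulmxA /= mul_ones uniserial_dimR //; lia.
exists (fun i => w i *m ones 1 (rdim E i)); split=> i.
  rewrite -mulmxA /= mul_ones.
  have [supp_i1|_] := boolP (x <= i.+1 <= j); last by apply: mx_dim0_eq; right.
  rewrite mulmxA /w -pull_to_lt -/w; last by lia.
  have [le_xi|lt_ix] := leqP x i; first by rewrite (_ : i <= j) //; lia.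
  by rewrite w_vanish // !mul0mx.
have [supp_i|/negbTE out] := boolP (x <= i <= j); last by apply: mx_dim0_eq; right; rewrite /= out.
rewrite mulmxA (f_w (j - i)) //; [|lia|lia].
by rewrite -mulmxA mul_ones ones_id ?mulmx1 // uniserial_dim_le1.
Qed.

End InjectiveEnvelope.

Lemma uniserial_not_injective n c x y : x < y ->
  is_module n c (uniserial x y) -> ~ injective_mod n c (uniserial x.+1 y).
Proof.
move=> lt_xy E_mod [F_mod F_inj].
have id_hom : is_hom (fun i => 1%:M : 'M[K]_(rdim (uniserial x.+1 y) i)).
  by move=> i; rewrite mulmx1 mul1mx.
have [h [h_hom h_retract]] := F_inj _ _ _ _ F_mod E_mod (canon_hom (leqnSn x) (leqnn y))
  id_hom (canon_mono (leqnSn x) (leqnn y)).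
have h_x : h x = 0%R by apply: mx_dim0_eq; right => /=; rewrite ltnn.
have h_x1 : h x.+1 = 0%R.
  apply: (ones_mulI (uniserial_dim_le1 x y x.+1)); rewrite mulmx0.
  have := congr1 (mulmx (ones 1 (rdim (uniserial x y) x))) (h_hom x).
  by rewrite h_x mul0mx mulmx0 mulmxA /= mul_ones uniserial_dimR //; lia.
have := h_retract x.+1; rewrite h_x1 mulmx0 => /(congr1 mxrank).
by rewrite mxrank0 mxrank1 /= leqnn lt_xy.
Qed.

Section IdimObstruction.
Variables (n : nat) (c : nat -> nat) (k a b : nat).
Hypotheses (b_lt_n : b < n) (lt_ka : k < a) (lt_ab : a < b)
  (reach_E : forall i, k < i <= b -> b < i + c i)
  (reach_Y : forall i, k <= i <= a -> a < i + c i)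
  (short_k : k + c k <= b).

Local Notation M := (uniserial a.+1 b).
Local Notation E := (uniserial k.+1 b).
Local Notation X := (uniserial k.+1 a).
Local Notation Y := (uniserial k a).

Lemma obstruction_modules :
  [/\ is_module n c M, is_module n c E, is_module n c X & is_module n c Y].
Proof.
split; apply: uniserial_module; try lia; move=> i le_i;
  [apply: reach_E | apply: reach_E | have := @reach_E i | apply: reach_Y]; lia.
Qed.

Section Resolution.
Variables (I C : rep K) (f : Defs.hom M I) (p : Defs.hom I C).
Hypotheses (I_inj : injective_mod n c I) (p_hom : is_hom p) (f_mono : mono f)
  (p_epi : epi p) (fp_exact : exact_at f p).

Lemma f_p_eq0 i : f i *m p i = 0%R.
Proof. by apply/sub_kermxP; case/andP: (fp_exact i). Qed.

Section Extension.
Variables (u : Defs.hom E I).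
Hypotheses (u_hom : is_hom u) (u_ext : forall i, canon a.+1 b k.+1 b i *m u i = f i).

Lemma u_p_vanish : u a.+1 *m p a.+1 = 0%R.
Proof.
apply: (ones_mulI (uniserial_dim_le1 k.+1 b a.+1)); rewrite mulmx0.
have := congr1 (mulmx (ones 1 (rdim M a.+1))) (f_p_eq0 a.+1).
by rewrite -u_ext !mulmxA mul_ones uniserial_dimR ?mulmx0 //; lia.
Qed.

Definition induced_map : Defs.hom X C := fun i => canon k.+1 a k.+1 b i *m u i *m p i.

Lemma induced_map_hom : is_hom induced_map.
Proof.
move=> i; rewrite /induced_map; have [-> | ne_ia] := eqVneq i a.
  rewrite (mx_dim0_eq (_ *m u a.+1 *m p a.+1) 0%R) ?mulmx0; last by left => /=; case_support; lia.
  by rewrite -!mulmxA -p_hom (mulmxA (u a)) -u_hom -mulmxA u_p_vanish !mulmx0.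
rewrite -!mulmxA -p_hom (mulmxA (u i)) -u_hom !mulmxA !mul_ones /=.
case_support; first [done | (apply: mx_dim0_eq; lia) | (exfalso; lia)].
Qed.

Section Lift.
Variables (xi : Defs.hom Y C).
Hypotheses (xi_hom : is_hom xi) (xi_ext : forall i, canon k.+1 a k a i *m xi i = induced_map i).

Lemma top_in_arrow_image :
  exists v : 'M[K]_(1, rdim I k), v *m rmap I k = ones 1 (rdim E k.+1) *m u k.+1.
Proof.
have [B pB] := row_fullP (p_epi k).
exists (ones 1 (rdim Y k) *m xi k *m B); apply/eqP; rewrite -subr_eq0; apply/eqP.
have induced_top : ones 1 (rdim X k.+1) *m induced_map k.+1 = ones 1 (rdim Y k.+1) *m xi k.+1.
  by rewrite -xi_ext mulmxA mul_ones uniserial_dimR //; lia.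
have M_k1 : f k.+1 = 0%R by apply: mx_dim0_eq; left => /=; case_support; lia.
apply: (@submx0null _ _ (rdim M k.+1)); rewrite -M_k1.
case/andP: (fp_exact k.+1) => _; apply: submx_trans.
apply/sub_kermxP; rewrite mulmxBl -!mulmxA p_hom !mulmxA -(mulmxA _ B) pB mulmx1.
rewrite -(mulmxA _ (xi k)) -xi_hom mulmxA mul_ones uniserial_dimR; last by lia.
rewrite -induced_top !mulmxA mul_ones uniserial_dimR ?subrr //; lia.
Qed.

Lemma pmap_arrow_image (v : 'M[K]_(1, rdim I k)) :
  v *m rmap I k = ones 1 (rdim E k.+1) *m u k.+1 ->
  forall l, 0 < l -> k + l <= b -> v *m Defs.pmap I k l = ones 1 (rdim E (l + k)) *m u (l + k).
Proof.
move=> v_arrow; elim=> [|[|l] IHl] // _ le_b; first by rewrite /= mul1mx.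
rewrite /= mulmxA IHl // -?mulmxA -?u_hom ?mulmxA ?mul_ones ?uniserial_dimR //; lia.
Qed.

Lemma no_coresolution : False.
Proof.
have [v v_arrow] := top_in_arrow_image.
have reach_k := @reach_Y k; have ck_gt0 : 0 < c k by lia.
have u_ck : u (c k + k) = 0%R.
  apply: (ones_mulI (uniserial_dim_le1 k.+1 b _)).
  by rewrite mulmx0 -(pmap_arrow_image v_arrow ck_gt0 short_k) I_inj.1.2 ?mulmx0 //; lia.
have := f_mono (c k + k); rewrite -u_ext u_ck ?uniserial_dim_le1 // mulmx0 /row_free mxrank0 /=.
by case_support; lia.
Qed.

End Lift.
End Extension.
End Resolution.

Lemma uniserial_idim_gt1 : ~ idim_le n c 1 M.
Proof.
case=> I [C [f [p [I_inj [_ [f_hom [p_hom [f_mono [p_epi [fp_exact C_inj]]]]]]]]]].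
have [M_mod E_mod X_mod Y_mod] := obstruction_modules.
have le_k1a1 : k.+1 <= a.+1 := ltnW lt_ka.
have [u [u_hom u_ext]] := I_inj.2 _ _ _ f M_mod E_mod (canon_hom le_k1a1 (leqnn b)) f_hom
  (canon_mono le_k1a1 (leqnn b)).
have [xi [xi_hom xi_ext]] := C_inj.2 _ _ _ _ X_mod Y_mod (canon_hom (leqnSn k) (leqnn a))
  (induced_map_hom p_hom fp_exact u_hom u_ext) (canon_mono (leqnSn k) (leqnn a)).
exact: no_coresolution xi_ext.
Qed.

End IdimObstruction.

End NakayamaModules.

Lemma count_iota_upclosed (P : pred nat) N :
  (forall i i', i <= i' -> i' < N -> P i -> P i') ->
  forall i, i < N -> P i = (N - count P (iota 0 N) <= i).
Proof.
elim: N => [|N IHN] P_up // i lt_iN.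
have {}IHN := IHN (fun i i' le_ii' lt_i'N => P_up i i' le_ii' (ltnW lt_i'N)).
rewrite -addn1 iotaD count_cat /= add0n addn0.
have count_le := count_size P (iota 0 N); rewrite size_iota in count_le.
case PN: (P N).
  have [lt_iN'|le_Ni] := ltnP i N; first by rewrite IHN //; apply/idP/idP; lia.
  by rewrite (_ : i = N) ?PN; [symmetry; apply/idP|]; lia.
have count0 : count P (iota 0 N) = 0.
  apply/eqP; rewrite -leqn0 leqNgt -has_count; apply/hasP => -[j].
  by rewrite mem_iota => /andP[_ lt_jN] /(P_up j N (ltnW lt_jN) (ltnSn N)); rewrite PN.
rewrite count0 addn0; case Pi: (P i); last by symmetry; apply/negbTE; lia.
by have := P_up i N lt_iN (ltnSn N) Pi; rewrite PN.
Qed.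

Lemma dinj_le (c : nat -> nat) j : dinj c j <= j.+1.
Proof. by rewrite /dinj -[X in _ <= X](size_iota 0) count_size. Qed.

Section Kupisch.
Variables (K : fieldType) (n : nat) (c : nat -> nat).
Hypotheses (c_pos : forall i, i < n -> 0 < c i) (c_last : c n.-1 = 1)
  (kupisch : forall i, i < n.-1 -> c i <= (c i.+1).+1).

Lemma reach_mono i i' : i <= i' -> i' < n -> i + c i <= i' + c i'.
Proof.
move=> le_ii'; rewrite -(subnKC le_ii'); elim: (i' - i) => [|d IHd] lt_n; first by rewrite addn0.
apply: leq_trans (IHd _) _; first by lia.
have lt_last : i + d < n.-1 by lia.
by have := kupisch lt_last; rewrite addnS; lia.
Qed.

Lemma reach_le_n i : i < n -> i + c i <= n.
Proof. by move=> lt_in; have := reach_mono (_ : i <= n.-1) (_ : n.-1 < n); rewrite c_last; lia. Qed.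

Definition inj_start j := j.+1 - dinj c j.

Lemma reach_inj_start j i : j < n -> i <= j -> (j < i + c i) = (inj_start j <= i).
Proof.
move=> lt_jn le_ij.
apply: (count_iota_upclosed (P := fun i => j < i + c i)) => // i0 i1 le_01 lt_1j.
by have := reach_mono le_01 (_ : i1 < n); lia.
Qed.

Lemma inj_start_le j : j < n -> inj_start j <= j.
Proof. by move=> lt_jn; rewrite -reach_inj_start // -addn1 leq_add2l c_pos. Qed.

Lemma inj_start_mono a b : a <= b -> b < n -> inj_start a <= inj_start b.
Proof.
move=> le_ab lt_bn.
have [le_ba|] := leqP (inj_start b) a; last by have := inj_start_le (_ : a < n); lia.
rewrite -reach_inj_start //; last by lia.
by have := reach_inj_start lt_bn (inj_start_le lt_bn); rewrite leqnn; lia.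
Qed.

Lemma uniserial_envelope j : j < n -> injective_mod n c (uniserial K (inj_start j) j).
Proof.
move=> lt_jn; apply: uniserial_injective => //; first exact: inj_start_le.
by move=> i; apply: reach_inj_start.
Qed.

Lemma uniserial_idim_le1 a b : a < b -> b < n -> inj_start b <= a ->
  idim_le n c 1 (uniserial K a.+1 b) <-> inj_start a = inj_start b.
Proof.
move=> lt_ab lt_bn le_start; have lt_an : a < n by lia.
have le_starts := inj_start_mono (ltnW lt_ab) lt_bn.
split=> [idim1 | eq_start].
  apply/eqP; rewrite eqn_leq le_starts leqNgt; apply/negP => lt_starts.
  apply: (@uniserial_idim_gt1 K n c (inj_start b).-1 a b) idim1 => //; first lia.
  - by move=> i le_i; rewrite reach_inj_start //; lia.
  - by move=> i le_i; rewrite reach_inj_start //; lia.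
  - by rewrite leqNgt reach_inj_start //; lia.
have C_inj : injective_mod n c (uniserial K (inj_start b) a).
  by rewrite -eq_start; apply: uniserial_envelope.
exists (uniserial K (inj_start b) b), (uniserial K (inj_start b) a).
exists (canon K a.+1 b (inj_start b) b), (canon K (inj_start b) b (inj_start b) a).
split; first exact: uniserial_envelope.
split; first exact: C_inj.1.
split; first by apply: canon_hom; lia.
split; first by apply: canon_hom; lia.
split; first by apply: canon_mono; lia.
split; first by apply: canon_epi; lia.
split; first by apply: canon_exact; lia.
exact: C_inj.
Qed.

Lemma uniserial_sub_not_injective a b : a < b -> b < n -> inj_start b <= a ->
  ~ injective_mod n c (uniserial K a.+1 b).
Proof.
move=> lt_ab lt_bn le_start; apply: uniserial_not_injective lt_ab _.
by apply: uniserial_module => // i le_i; rewrite reach_inj_start //; lia.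
Qed.

Lemma eJ_uniserial s t : 0 < t -> eJ K c s t = uniserial K (s + t - 1).+1 (s + c s - 1).
Proof. by move=> t_gt0; rewrite /eJ /uniserial (_ : (s + t - 1).+1 = s + t) //; lia. Qed.

Lemma eJ_support s t : s < n -> 0 < t < c s ->
  [/\ s + t - 1 < s + c s - 1, s + c s - 1 < n & inj_start (s + c s - 1) <= s].
Proof.
move=> lt_sn t_range; have := reach_le_n lt_sn; split; try lia.
by rewrite -reach_inj_start; lia.
Qed.

Lemma eJ_idim_le1 s t : s < n -> 0 < t < c s ->
  idim_le n c 1 (eJ K c s t) <-> dinj c (s + c s - 1) - c s + t = dinj c (s + t - 1).
Proof.
move=> lt_sn t_range; have [lt_ab lt_bn le_start] := eJ_support lt_sn t_range.
rewrite eJ_uniserial ?uniserial_idim_le1 //; try lia.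
have := dinj_le c (s + t - 1); have := dinj_le c (s + c s - 1).
by rewrite /inj_start in le_start *; split; lia.
Qed.

Lemma eJ_not_injective s t : s < n -> 0 < t < c s -> ~ injective_mod n c (eJ K c s t).
Proof.
move=> lt_sn t_range; have [lt_ab lt_bn le_start] := eJ_support lt_sn t_range.
by rewrite eJ_uniserial; [apply: uniserial_sub_not_injective | ]; lia.
Qed.

End Kupisch.

Theorem mainTheorem7 (K : fieldType) (n : nat) (c : nat -> nat)
  (* Kupisch series of a (connected) linear Nakayama algebra *)
  (hlast : c n.-1 = 1%N)
  (hge2 : forall i, (i < n.-1)%N -> (2 <= c i)%N)
  (hkup : forall i, (i < n.-1)%N -> (c i <= (c i.+1).+1)%N)
  (s t : nat) (hs : (s <= n - 2)%N) (ht1 : (1 <= t)%N) (ht2 : (t <= c s - 1)%N) :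
  (idim_le n c 1 (eJ K c s t) <->
     dinj c (s + c s - 1) - c s + t = dinj c (s + t - 1))
  /\ (dinj c (s + c s - 1) - c s + t = dinj c (s + t - 1) ->
        ~ idim_le n c 0 (eJ K c s t))
  /\ (idim_le n c 1 (eJ K c s 1) <->
        dinj c (s + c s - 1) - c s + 1 = dinj c s).
Proof.
have c_pos i : i < n -> 0 < c i.
  move=> lt_in; have [/hge2|le_last] := ltnP i n.-1; first by lia.
  by rewrite (_ : i = n.-1) ?hlast; lia.
have lt_sn : s < n.
  by rewrite ltnNge; apply/negP => le_ns; move: ht2; rewrite (_ : s = n.-1) ?hlast; lia.
have t_range : 0 < t < c s by lia.
split; first exact: eJ_idim_le1.
split; first by move=> _; exact: eJ_not_injective.
have one_range : 0 < 1 < c s by lia.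
by have := eJ_idim_le1 K c_pos hlast hkup lt_sn one_range; rewrite addnK.
Qed.
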